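(* Suppose that $R$ has both $\mathbf{x}$-vertices and $\mathbf{y}$-vertices. If $(x^1,y^1)$ is a $\mathbf{y}$-vertex of $R$, then there exists an $\mathbf{x}$-vertex $(x',y')$ of $R$ such that \[ d_R((x^1,y^1),(x',y'))\le d(\bar A)+d(Q_B)+1. \]
   Context: Let $A\in\mathbb{R}^{m_1\times n_1}$, nonzero $a\in\mathbb{R}^{1\times n_1}$, nonzero $b\in\mathbb{R}^{1\times n_2}$, $B\in\mathbb{R}^{m_2\times n_2}$, $c_A\in\mathbb{R}^{m_1}$, $c_B\in\mathbb{R}^{m_2}$, $c_a,c_b\in\mathbb{R}$, and $R=\{(x,y)\in\mathbb{R}^{n_1}\times\mathbb{R}^{n_2}: Ax=c_A,\ ax+by=c_a+c_b,\ By=c_B,\ x,y\ge 0\}$. Assume $R$ is simple (nondegenerate). Let $P_A=\{x: Ax=c_A, x\ge 0\}$, $Q_B=\{y: By=c_B, y\ge 0\}$ and $\bar A=\begin{bmatrix}A\\ a\end{bmatrix}$. A vertex $(x,y)$ of $R$ is an $\mathbf{x}$-vertex if $x$ is a vertex of $P_A$, and a $\mathbf{y}$-vertex if $y$ is a vertex of $Q_B$. $d_R(v,w)$ is the minimum number of edges of an edge walk in $R$ from $v$ to $w$. For a polyhedron $P$, $d(P)$ is its combinatorial diameter, and for a matrix $M\in\mathbb{R}^{m\times n}$, $d(M):=\max\{d(\{z: Mz=r, z\ge 0\}): r\in\mathbb{R}^m\}$. *)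

From HB Require Import structures.
From mathcomp Require Import all_boot all_order all_algebra.
From mathcomp Require Import reals.
Set Implicit Arguments. Unset Strict Implicit. Unset Printing Implicit Defensive.
Import Order.TTheory GRing.Theory Num.Theory.
Local Open Scope ring_scope.

Section Poly.
Variable R : realType.

Definition dotp n (c : 'rV[R]_n) (z : 'cV[R]_n) : R := \sum_(i < n) c 0 i * z i 0.

Definition std_poly m n (M : 'M[R]_(m, n)) (r : 'cV[R]_m) : 'cV[R]_n -> Prop :=
  fun z => M *m z = r /\ forall i, 0 <= z i 0.

Definition is_vertex n (P : 'cV[R]_n -> Prop) (z : 'cV[R]_n) : Prop :=
  P z /\ exists (c : 'rV[R]_n) (delta : R),
    (forall y, P y -> dotp c y <= delta) /\
    (forall y, P y -> (dotp c y = delta <-> y = z)).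

Definition adjacent n (P : 'cV[R]_n -> Prop) (v w : 'cV[R]_n) : Prop :=
  is_vertex P v /\ is_vertex P w /\ v <> w /\
  exists (c : 'rV[R]_n) (delta : R),
    (forall y, P y -> dotp c y <= delta) /\
    (forall y, P y -> (dotp c y = delta <->
        exists t : R, 0 <= t <= 1 /\ y = t *: v + (1 - t) *: w)).

Fixpoint walk_le n (P : 'cV[R]_n -> Prop) (k : nat) (v w : 'cV[R]_n) : Prop :=
  match k with
  | O => v = w
  | k'.+1 => v = w \/ exists u, adjacent P v u /\ walk_le P k' u w
  end.

Definition diam_le n (P : 'cV[R]_n -> Prop) (k : nat) : Prop :=
  forall v w, is_vertex P v -> is_vertex P w -> walk_le P k v w.

(* d(M) <= k : every polyhedron {z : M z = r, z >= 0} has diameter at most k *)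
Definition mx_diam_le m n (M : 'M[R]_(m, n)) (k : nat) : Prop :=
  forall r : 'cV[R]_m, diam_le (std_poly M r) k.

Definition std_nondegenerate m n (M : 'M[R]_(m, n)) (r : 'cV[R]_m) : Prop :=
  forall z, is_vertex (std_poly M r) z -> #|[set i : 'I_n | z i 0 != 0]| = \rank M.

(* the constraint matrix / right-hand side of R, variables z = (x ; y) *)
Definition Rmat m1 n1 m2 n2 (A : 'M[R]_(m1, n1)) (a : 'rV[R]_n1)
  (b : 'rV[R]_n2) (B : 'M[R]_(m2, n2)) : 'M[R]_(m1 + (1 + m2), n1 + n2) :=
  col_mx (row_mx A 0) (col_mx (row_mx a b) (row_mx 0 B)).

Definition Rrhs m1 m2 (cA : 'cV[R]_m1) (ca cb : R) (cB : 'cV[R]_m2)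
  : 'cV[R]_(m1 + (1 + m2)) :=
  col_mx cA (col_mx (const_mx (ca + cb)) cB).

End Poly.

From HB Require Import structures.
From mathcomp Require Import all_boot all_order all_algebra.
From mathcomp Require Import reals boolp.
From mathcomp.algebra_tactics Require Import ring lra.
Set Implicit Arguments. Unset Strict Implicit. Unset Printing Implicit Defensive.
Import Order.TTheory GRing.Theory Num.Theory.
Local Open Scope ring_scope.

(* Let (x1, y1) be the given y-vertex and (v, ys) an x-vertex.  The slice
   S = {x in P_A : a x = a x1} is a polyhedron with constraint matrix A-bar, and x |-> (x, y1)
   maps vertices and edges of S to vertices and edges of R; so if a v = a x1, then (v, y1) is
   an x-vertex within d(A-bar) steps.  Otherwise say a x1 < a v, the other case being
   symmetric.  Decreasing a x by the simplex method on P_A from v either reaches a vertex of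
   P_A in S, and we conclude as before, or stops on an edge q + R_+ d of P_A crossing S at
   some x2, so that (x2, y1) is reached within d(A-bar) steps.  Then walk in Q_B from y1, in at
   most d(Q_B) steps, to the vertex where the simplex method minimising b y stops, and lift
   each edge to an edge of R by sliding x along q + R d so that a x + b y stays constant:
   x moves towards q, and as soon as it hits a vertex of P_A we are at an x-vertex.  The walk
   cannot end at a minimiser of b y, for then b y > c - a q >= c - a v = b ys (c = ca + cb);
   so it ends with an unbounded edge of Q_B, along which one more edge of R brings x to q.
   Vertices and edges are handled through the algebraic characterisation of standard-form
   polyhedra: a feasible point z is a vertex iff the kernel of the constraint matrix contains
   no nonzero vector supported in supp z ([basic]), and two vertices v, w are adjacent iff the
   kernel vectors supported in supp v \cup supp w are the multiples of w - v ([adjacentP]). *)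

Section StandardForm.
Variable R : realType.

Lemma dotpE n (c : 'rV[R]_n) z : dotp c z = (c *m z) 0 0.
Proof. by rewrite /dotp mxE. Qed.

Lemma dotpD n (c : 'rV[R]_n) x y : dotp c (x + y) = dotp c x + dotp c y.
Proof. by rewrite !dotpE mulmxDr mxE. Qed.

Lemma dotpZ n (c : 'rV[R]_n) t x : dotp c (t *: x) = t * dotp c x.
Proof. by rewrite !dotpE -scalemxAr mxE. Qed.

Lemma dotpN n (c : 'rV[R]_n) x : dotp c (- x) = - dotp c x.
Proof. by rewrite !dotpE mulmxN mxE. Qed.

Lemma dotpB n (c : 'rV[R]_n) x y : dotp c (x - y) = dotp c x - dotp c y.
Proof. by rewrite dotpD dotpN. Qed.

Lemma dotpZl n (c : 'rV[R]_n) t x : dotp (t *: c) x = t * dotp c x.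
Proof. by rewrite !dotpE -scalemxAl mxE. Qed.

Lemma dotp0 n (c : 'rV[R]_n) : dotp c 0 = 0.
Proof. by rewrite dotpE mulmx0 mxE. Qed.

Lemma dotp_mx11 n (c : 'rV[R]_n) x : c *m x = (dotp c x)%:M.
Proof. by rewrite [LHS]mx11_scalar dotpE. Qed.

Lemma mx11P (X Y : 'M[R]_1) : X = Y <-> X 0 0 = Y 0 0.
Proof. by split=> [-> // | e]; rewrite [X]mx11_scalar [Y]mx11_scalar e. Qed.

Lemma ratio_test n (P : pred 'I_n) (z d : 'I_n -> R) :
  (forall j, P j -> 0 <= z j) -> (exists j, P j /\ d j < 0) ->
  exists t, [/\ 0 <= t, forall j, P j -> 0 <= z j + t * d j &
    exists j, [/\ P j, d j < 0 & z j + t * d j = 0]].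
Proof.
move=> z0 [j1 [Pj1 dj1]].
pose Q : pred 'I_n := fun j => P j && (d j < 0).
have Qj1 : Q j1 by rewrite /Q Pj1 dj1.
case: (arg_minP (fun j => z j / - d j) Qj1) => j0 /andP[Pj0 dj0] min0.
have ndj0 : 0 < - d j0 by rewrite oppr_gt0.
exists (z j0 / - d j0); split; first by rewrite divr_ge0 ?z0 // ltW.
  move=> j Pj; case: (leP 0 (d j)) => dj.
    by rewrite addr_ge0 ?z0 // mulr_ge0 // divr_ge0 ?z0 // ltW.
  have ndj : 0 < - d j by rewrite oppr_gt0.
  have := min0 j; rewrite /Q Pj dj => /(_ isT) h.
  by rewrite -[d j]opprK mulrN subr_ge0 -ler_pdivlMr.
exists j0; split=> //; rewrite -[d j0]opprK mulrN opprK divfK ?subrr //.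
by rewrite lt0r_neq0.
Qed.

Definition supp_within n (g v w : 'cV[R]_n) :=
  forall j, v j 0 = 0 -> w j 0 = 0 -> g j 0 = 0.

Definition basic m n (M : 'M[R]_(m, n)) (z : 'cV[R]_n) :=
  forall g, M *m g = 0 -> supp_within g z z -> g = 0.

Definition edge_dir m n (M : 'M[R]_(m, n)) (z e : 'cV[R]_n) :=
  forall g, M *m g = 0 -> supp_within g z e -> exists mu, g = mu *: e.

Lemma std_poly_line m n (M : 'M[R]_(m, n)) r z g t :
  std_poly M r z -> M *m g = 0 -> (forall j, 0 <= z j 0 + t * g j 0) ->
  std_poly M r (z + t *: g).
Proof.
move=> [Mz _] Mg g0; split=> [|j]; last by rewrite !mxE.
by rewrite mulmxDr -scalemxAr Mg scaler0 addr0.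
Qed.

Lemma std_poly_conv m n (M : 'M[R]_(m, n)) r p q t :
  std_poly M r p -> std_poly M r q -> 0 <= t <= 1 ->
  std_poly M r (t *: p + (1 - t) *: q).
Proof.
move=> [Mp p0] [Mq q0] /andP[t0 t1]; split.
  by rewrite mulmxDr -!scalemxAr Mp Mq -scalerDl subrKC scale1r.
by move=> i; rewrite !mxE addr_ge0 // mulr_ge0 // subr_ge0.
Qed.

Lemma zeros_face m n (M : 'M[R]_(m, n)) r (Z : pred 'I_n) :
  exists c del, (forall y, std_poly M r y -> dotp c y <= del) /\
    forall y, std_poly M r y -> (dotp c y = del <-> forall j, Z j -> y j 0 = 0).
Proof.
pose c : 'rV[R]_n := \row_j (if Z j then -1 else 0).
have cE y : dotp c y = - \sum_(j | Z j) y j 0.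
  rewrite /dotp [in RHS]big_mkcond /= -sumrN; apply: eq_bigr => i _.
  by rewrite mxE; case: (Z i); rewrite ?mul0r ?oppr0 // mulN1r.
exists c, 0; split=> [y [_ y0] | y [_ y0]]; rewrite cE; first by rewrite oppr_le0 sumr_ge0.
split=> [/eqP | y0Z]; last by rewrite big1 ?oppr0.
by rewrite oppr_eq0 => /eqP /psumr_eq0P; apply.
Qed.

Lemma perturb_nonneg n (z g : 'cV[R]_n) :
  (forall j, 0 <= z j 0) -> supp_within g z z ->
  exists2 eps, 0 < eps &
    forall j, 0 <= z j 0 + eps * g j 0 /\ 0 <= z j 0 - eps * g j 0.
Proof.
move=> z0 sg.
have [/existsP[j1 gj1] | /existsP g0] := boolP [exists j, g j 0 != 0]; last first.
  exists 1 => // j; have /negP/negbNE/eqP -> := fun h => g0 (ex_intro _ j h).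
  by rewrite mulr0 addr0 subr0.
have [|t [t0 feas [j [gj _ hz]]]] := @ratio_test n (fun j => g j 0 != 0)
    (fun j => z j 0) (fun j => - `|g j 0|) (fun j _ => z0 j).
  by exists j1; rewrite oppr_lt0 normr_gt0.
have zj : z j 0 != 0 by apply: contraNneq gj => zj; apply/eqP/sg.
have tp : 0 < t.
  rewrite lt_def t0 andbT; apply: contraNneq zj => t0'.
  by move: hz; rewrite t0' mul0r addr0 => ->.
exists t => // i; have [->|gi] := eqVneq (g i 0) 0; first by rewrite mulr0 addr0 subr0.
have := feas i gi; rewrite mulrN => h; split; apply: (le_trans h); rewrite lerD2l.
  by rewrite -mulrN ler_pM2l // lerNl -normrN ler_norm.
by rewrite lerN2 ler_pM2l // ler_norm.
Qed.

Lemma face_perturb m n (M : 'M[R]_(m, n)) r c del z g :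
  (forall y, std_poly M r y -> dotp c y <= del) -> std_poly M r z -> dotp c z = del ->
  M *m g = 0 -> supp_within g z z ->
  exists2 eps, 0 < eps & std_poly M r (z + eps *: g) /\ dotp c (z + eps *: g) = del.
Proof.
move=> hle Pz cz Mg sg.
have [eps eps0 hpm] := perturb_nonneg Pz.2 sg.
have Pp : std_poly M r (z + eps *: g) by apply: std_poly_line => // j; case: (hpm j).
have Pm : std_poly M r (z + (- eps) *: g).
  by apply: std_poly_line => // j; rewrite mulNr; case: (hpm j).
exists eps => //; split=> //; have := hle _ Pp; have := hle _ Pm.
rewrite !dotpD !dotpZ cz => h1 h2.
have : eps * dotp c g = 0 by apply/eqP; rewrite eq_le; apply/andP; split; lra.
by move/eqP; rewrite mulf_eq0 gt_eqF //= => /eqP ->; rewrite mulr0 addr0.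
Qed.

Lemma basic_vertex m n (M : 'M[R]_(m, n)) r z :
  std_poly M r z -> basic M z -> is_vertex (std_poly M r) z.
Proof.
move=> Pz hb; split=> //.
have [c [del [hle heq]]] := zeros_face M r (fun j => z j 0 == 0).
exists c, del; split=> // y Py; rewrite heq //; split=> [y0 | -> j /eqP //].
apply/eqP; rewrite -subr_eq0; apply/eqP/hb; first by rewrite mulmxBr Py.1 Pz.1 subrr.
by move=> j zj _; rewrite !mxE zj y0 ?subrr //; apply/eqP.
Qed.

Lemma vertex_basic m n (M : 'M[R]_(m, n)) r z :
  is_vertex (std_poly M r) z -> basic M z.
Proof.
move=> [Pz [c [del [hle heq]]]] g Mg sg.
have [eps eps0 [Pp cp]] := face_perturb hle Pz ((heq z Pz).2 erefl) Mg sg.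
have /eqP := (heq _ Pp).1 cp.
by rewrite addrC -subr_eq0 addrK scaler_eq0 gt_eqF //= => /eqP.
Qed.

Lemma vertex_extreme n (P : 'cV[R]_n -> Prop) z p q t :
  is_vertex P z -> P p -> P q -> 0 < t < 1 -> z = t *: p + (1 - t) *: q -> q = z.
Proof.
move=> [Pz [c [del [hle heq]]]] Pp Pq /andP[t0 t1] ez; apply/(heq _ Pq).
have := (heq _ Pz).2 erefl; rewrite ez dotpD !dotpZ => cz.
have := hle _ Pp; have := hle _ Pq; move: cz.
move: (dotp c p) (dotp c q) => cp cq cz h1 h2; nra.
Qed.

Lemma vertex_line_ge0 n (P : 'cV[R]_n -> Prop) v w mu :
  is_vertex P v -> P w -> P (v + mu *: (w - v)) -> v <> w -> 0 <= mu.
Proof.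
move=> Vv Pw Py nvw; rewrite leNgt; apply/negP => mu0; apply: nvw; symmetry.
apply: (vertex_extreme (t := (1 - mu)^-1) Vv Py Pw).
  by rewrite invr_gt0 invf_lt1; lra.
have mu1 : 1 - mu != 0 by rewrite gt_eqF //; lra.
apply/matrixP => i j; rewrite !mxE; field; exact: mu1.
Qed.

Lemma adjacent_edge_dir m n (M : 'M[R]_(m, n)) r v w :
  adjacent (std_poly M r) v w -> edge_dir M v (w - v).
Proof.
move=> [[Pv _] [[Pw _] [_ [c [del [hle heq]]]]]] g Mg sg.
pose h : R := 2^-1; pose u := h *: v + (1 - h) *: w.
have Pu : std_poly M r u by apply: std_poly_conv => //; rewrite /h; lra.
have su : supp_within g u u.
  move=> j /eqP; rewrite !mxE /h => uj _; have := Pv.2 j; have := Pw.2 j.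
  move=> w0 v0; apply: sg; rewrite ?mxE; lra.
have cu : dotp c u = del by apply/(heq u Pu); exists h; split=> //; rewrite /h; lra.
have [eps eps0 [Pp cp]] := face_perturb hle Pu cu Mg su.
have [t [_ et]] := (heq _ Pp).1 cp.
exists ((h - t) / eps); apply/matrixP => i j; move/matrixP: et => /(_ i j).
rewrite !mxE /u => e; apply: (mulfI (lt0r_neq0 eps0)).
rewrite mulrA mulrCA divff ?lt0r_neq0 //.
lra.
Qed.

Lemma edge_dir_adjacent m n (M : 'M[R]_(m, n)) r v w :
  is_vertex (std_poly M r) v -> is_vertex (std_poly M r) w -> v <> w ->
  edge_dir M v (w - v) -> adjacent (std_poly M r) v w.
Proof.
move=> Vv Vw nvw he; do 3!split=> //.
have [c [del [hle heq]]] := zeros_face M r (fun j => (v j 0 == 0) && (w j 0 == 0)).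
exists c, del; split=> // y Py; rewrite heq //; split; last first.
  move=> [t [_ ->]] j /andP[/eqP vj /eqP wj].
  by rewrite !mxE vj wj !mulr0 addr0.
move=> y0; have [mu emu] : exists mu, y - v = mu *: (w - v).
  apply: he; first by rewrite mulmxBr Py.1 Vv.1.1 subrr.
  move=> j vj /eqP; rewrite !mxE vj subr0 => /eqP wj.
  by rewrite y0 ?vj ?wj ?eqxx // subrr.
have ey : y = v + mu *: (w - v) by rewrite -emu addrC subrK.
have mu0 : 0 <= mu by apply: vertex_line_ge0 Vv Vw.1 _ nvw; rewrite -ey.
have mu1 : 0 <= 1 - mu.
  apply: vertex_line_ge0 Vw Vv.1 _ (nesym nvw).
  suff <- : y = w + (1 - mu) *: (v - w) by [].
  by rewrite ey; apply/matrixP => i j; rewrite !mxE; ring.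
exists (1 - mu); split; first by apply/andP; split; lra.
by rewrite ey; apply/matrixP => i j; rewrite !mxE; ring.
Qed.

Lemma adjacentP m n (M : 'M[R]_(m, n)) r v w :
  adjacent (std_poly M r) v w <->
  [/\ is_vertex (std_poly M r) v, is_vertex (std_poly M r) w, v <> w & edge_dir M v (w - v)].
Proof.
split=> [hadj | [Vv Vw nvw he]]; last exact: edge_dir_adjacent.
have [Vv [Vw [nvw _]]] := hadj; split=> //; exact: adjacent_edge_dir hadj.
Qed.

Definition n_blocked n (z d : 'cV[R]_n) := #|[set j | (z j 0 == 0) && (d j 0 != 0)]|.

Lemma non_edge_dir_witness m n (M : 'M[R]_(m, n)) (f : 'rV[R]_n) z d :
  basic M z -> M *m d = 0 -> dotp f d != 0 -> ~ edge_dir M z d ->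
  exists h, [/\ M *m h = 0, supp_within h z d, dotp f h = 0 &
    exists2 j, z j 0 = 0 & 0 < h j 0].
Proof.
move=> hb Md fd ne.
have [g [Mg sg ng]] : exists g, [/\ M *m g = 0, supp_within g z d & ~ exists mu, g = mu *: d].
  apply: contrapT => hn; apply: ne => g Mg sg; apply: contrapT => ng.
  by apply: hn; exists g.
pose g' := g - (dotp f g / dotp f d) *: d.
have Mg' : M *m g' = 0 by rewrite mulmxBr -scalemxAr Mg Md scaler0 subrr.
have sg' : supp_within g' z d.
  by move=> j zj dj; rewrite !mxE (sg j zj dj) dj mulr0 subrr.
have fg' : dotp f g' = 0 by rewrite dotpB dotpZ divfK // subrr.
have [j1 zj1 gj1] : exists2 j, z j 0 = 0 & g' j 0 != 0.
  apply: contrapT => hall; apply: ng; exists (dotp f g / dotp f d).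
  apply: subr0_eq; apply: (hb g' Mg') => j zj _.
  by apply/eqP; apply: contrapT => /negP gj; apply: hall; exists j.
have [gp | gn] := ltP 0 (g' j1 0); first by exists g'; split=> //; exists j1.
exists (- g'); split.
- by rewrite mulmxN Mg' oppr0.
- by move=> j zj dj; rewrite mxE sg' // oppr0.
- by rewrite dotpN fg' oppr0.
by exists j1; rewrite // mxE oppr_gt0 lt_neqAle gj1 gn.
Qed.

Lemma improving_dir_unblock m n (M : 'M[R]_(m, n)) (f : 'rV[R]_n) z d :
  basic M z -> M *m d = 0 -> (forall j, z j 0 = 0 -> 0 <= d j 0) -> dotp f d < 0 ->
  ~ edge_dir M z d ->
  exists d', [/\ M *m d' = 0, forall j, z j 0 = 0 -> 0 <= d' j 0, dotp f d' < 0
                 & (n_blocked z d' < n_blocked z d)%N].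
Proof.
move=> hb Md d0 fd ne.
have [h [Mh sh fh [j2 zj2 hj2]]] := non_edge_dir_witness hb Md (ltr0_neq0 fd) ne.
have ex2 : exists j, z j 0 == 0 /\ - h j 0 < 0.
  by exists j2; rewrite zj2 eqxx oppr_lt0.
have [mu [_ feas [j0 [zj0 hj0 ej0]]]] :=
  ratio_test (fun j (zj : z j 0 == 0) => d0 j (eqP zj)) ex2.
exists (d - mu *: h); split.
- by rewrite mulmxBr -scalemxAr Mh Md scaler0 subrr.
- by move=> j zj; rewrite !mxE -mulrN; apply: feas; apply/eqP.
- by rewrite dotpB dotpZ fh mulr0 subr0.
apply: proper_card; apply/properP; split.
  apply/subsetP => j; rewrite !inE => /andP[zj]; rewrite zj /=.
  by apply: contraNN => /eqP dj; rewrite !mxE (sh j (eqP zj) dj) dj mulr0 subrr.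
exists j0; rewrite !inE zj0 /=; last by rewrite !mxE -mulrN ej0 eqxx.
by apply: contraTneq hj0 => dj; rewrite (sh j0 (eqP zj0) dj) oppr0 ltxx.
Qed.

Lemma improving_edge_dir m n (M : 'M[R]_(m, n)) r (f : 'rV[R]_n) z p :
  is_vertex (std_poly M r) z -> std_poly M r p -> dotp f p < dotp f z ->
  exists d, [/\ M *m d = 0, forall j, z j 0 = 0 -> 0 <= d j 0, dotp f d < 0
                & edge_dir M z d].
Proof.
move=> Vz [Mp p0] fpz; have hb := vertex_basic Vz.
suff H: forall d, M *m d = 0 -> (forall j, z j 0 = 0 -> 0 <= d j 0) -> dotp f d < 0 ->
    exists d, [/\ M *m d = 0, forall j, z j 0 = 0 -> 0 <= d j 0, dotp f d < 0
                  & edge_dir M z d].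
  apply: (H (p - z)); first by rewrite mulmxBr Mp Vz.1.1 subrr.
    by move=> j zj; rewrite !mxE zj subr0.
  by rewrite dotpB subr_lt0.
move=> d; have [k] := ubnP (n_blocked z d); elim: k d => // k IH d hk Md d0 fd.
have [he | ne] := pselect (edge_dir M z d); first by exists d.
have [d' [Md' d0' fd' lt]] := improving_dir_unblock hb Md d0 fd ne.
exact: IH (leq_trans lt _) Md' d0' fd'.
Qed.

Lemma edge_dir_vertex m n (M : 'M[R]_(m, n)) r z d x :
  edge_dir M z d -> std_poly M r x -> (forall j, z j 0 = 0 -> d j 0 = 0 -> x j 0 = 0) ->
  (exists j, x j 0 = 0 /\ d j 0 != 0) -> is_vertex (std_poly M r) x.
Proof.
move=> he Px hs [j0 [xj0 dj0]]; apply: basic_vertex => // g Mg sg.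
have [mu emu] := he g Mg (fun j zj dj => sg j (hs j zj dj) (hs j zj dj)).
have /eqP : g j0 0 = 0 by apply: sg.
by rewrite emu mxE mulf_eq0 (negbTE dj0) orbF => /eqP ->; rewrite scale0r.
Qed.

Lemma edge_step m n (M : 'M[R]_(m, n)) r z d :
  is_vertex (std_poly M r) z -> M *m d = 0 -> (forall j, z j 0 = 0 -> 0 <= d j 0) ->
  edge_dir M z d -> (exists j, d j 0 < 0) ->
  exists t, [/\ 0 < t, forall j, 0 <= z j 0 + t * d j 0 &
                is_vertex (std_poly M r) (z + t *: d)].
Proof.
move=> Vz Md d0 he [j1 dj1]; have z0 := Vz.1.2.
have [|t [t0 feas [j0 [_ dj0 ej0]]]] := @ratio_test n predT (fun j => z j 0)
    (fun j => d j 0) (fun j _ => z0 j); first by exists j1.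
have zj0 : z j0 0 != 0 by apply: contraTneq dj0 => /d0; rewrite leNgt => /negbTE ->.
have tp : 0 < t.
  rewrite lt_def t0 andbT; apply: contraNneq zj0 => t0'.
  by move: ej0; rewrite t0' mul0r addr0 => ->.
exists t; split=> //; first by move=> j; apply: feas.
apply: (edge_dir_vertex he); first by apply: std_poly_line Vz.1 Md _ => j; apply: feas.
  by move=> j zj dj; rewrite !mxE zj dj mulr0 addr0.
by exists j0; rewrite !mxE ej0 lt_eqF.
Qed.

Definition supp n (w : 'cV[R]_n) := [set j | w j 0 != 0].

Lemma vertex_supp_inj m n (M : 'M[R]_(m, n)) r w z :
  is_vertex (std_poly M r) w -> is_vertex (std_poly M r) z -> supp w = supp z -> w = z.
Proof.
move=> Vw Vz es; apply/eqP; rewrite -subr_eq0; apply/eqP/(vertex_basic Vz).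
  by rewrite mulmxBr Vw.1.1 Vz.1.1 subrr.
move=> j zj _; rewrite !mxE zj subr0.
have : j \notin supp z by rewrite inE zj eqxx.
by rewrite -es inE negbK => /eqP.
Qed.

(* Supports rather than vertices, so as to count in a finite type. *)
Definition better_supps m n (M : 'M[R]_(m, n)) r (f : 'rV[R]_n) z :=
  [set S : {set 'I_n} | `[< exists w, [/\ is_vertex (std_poly M r) w, supp w = S
                                        & dotp f w < dotp f z] >]].

Lemma better_supps_lt m n (M : 'M[R]_(m, n)) r f z z' :
  is_vertex (std_poly M r) z' -> dotp f z' < dotp f z ->
  (#|better_supps M r f z'| < #|better_supps M r f z|)%N.
Proof.
move=> Vz' lt; apply: proper_card; apply/properP; split.
  apply/subsetP => S; rewrite !inE => /asboolP[w [Vw sw fw]].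
  by apply/asboolP; exists w; split=> //; apply: lt_trans lt.
exists (supp z'); rewrite !inE; first by apply/asboolP; exists z'.
apply/negP => /asboolP[w [Vw sw fw]].
by move: fw; rewrite (vertex_supp_inj Vw Vz' sw) ltxx.
Qed.

Lemma better_vertex_ind m n (M : 'M[R]_(m, n)) r (f : 'rV[R]_n) (Q : 'cV[R]_n -> Prop) :
  (forall z, is_vertex (std_poly M r) z ->
     (forall z', is_vertex (std_poly M r) z' -> dotp f z' < dotp f z -> Q z') -> Q z) ->
  forall z, is_vertex (std_poly M r) z -> Q z.
Proof.
move=> IH z; have [k] := ubnP #|better_supps M r f z|; elim: k z => // k IHk z hk Vz.
apply: IH => // z' Vz' lt.
exact: IHk (leq_trans (better_supps_lt Vz' lt) hk) Vz'.
Qed.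

Lemma simplex_descent m n (M : 'M[R]_(m, n)) r (f : 'rV[R]_n) z :
  is_vertex (std_poly M r) z -> exists2 z', is_vertex (std_poly M r) z' &
    (forall p, std_poly M r p -> dotp f z' <= dotp f p) \/
    exists d, [/\ M *m d = 0, forall j, 0 <= d j 0, dotp f d < 0 & edge_dir M z' d].
Proof.
move: z; apply: (better_vertex_ind (f := f)) => z Vz IH.
have [hmin | /existsPNP[p Pp /negP]] :=
  pselect (forall p, std_poly M r p -> dotp f z <= dotp f p); first by exists z => //; left.
rewrite -ltNge => fp; have [d [Md d0 fd he]] := improving_edge_dir Vz Pp fp.
have [[j dj] | hpos] := pselect (exists j, d j 0 < 0); last first.
  exists z => //; right; exists d; split=> // j.
  by rewrite leNgt; apply/negP => dj; apply: hpos; exists j.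
have [t [t0 _ Vz']] := edge_step Vz Md d0 he (ex_intro _ j dj).
by apply: IH Vz' _; rewrite dotpD dotpZ gtrDl pmulr_rlt0.
Qed.

Definition edge_interior n (q d : 'cV[R]_n) (l : R) :=
  forall j, (q j 0 != 0) || (d j 0 != 0) -> 0 < q j 0 + l * d j 0.

Lemma edge_interior_nonneg n (q d : 'cV[R]_n) l :
  edge_interior q d l -> forall j, 0 <= q j 0 + l * d j 0.
Proof.
move=> hI j; have [/hI/ltW // | ] := boolP ((q j 0 != 0) || (d j 0 != 0)).
by rewrite negb_or !negbK => /andP[/eqP -> /eqP ->]; rewrite mulr0 addr0.
Qed.

Lemma simplex_to_level m n (M : 'M[R]_(m, n)) r (f : 'rV[R]_n) z x :
  is_vertex (std_poly M r) z -> std_poly M r x -> dotp f x < dotp f z ->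
  exists q, [/\ is_vertex (std_poly M r) q, dotp f q <= dotp f z &
    dotp f q = dotp f x \/
    exists d, [/\ M *m d = 0, forall j, q j 0 = 0 -> 0 <= d j 0, dotp f d < 0,
      edge_dir M q d & exists l, edge_interior q d l /\ dotp f (q + l *: d) = dotp f x]].
Proof.
move=> + Px; move: z; apply: (better_vertex_ind (f := f)) => z Vz IH fxz.
have [d [Md d0 fd he]] := improving_edge_dir Vz Px fxz.
pose l := (dotp f x - dotp f z) / dotp f d.
have lfd : l * dotp f d = dotp f x - dotp f z by rewrite divfK // ltr0_neq0.
have [hint | /existsPNP[j hj /negP]] := pselect (edge_interior z d l).
  exists z; split=> //; right; exists d; split=> //; exists l; split=> //.
  by rewrite dotpD dotpZ lfd addrC subrK.
rewrite -leNgt => bad.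
have l0 : 0 < l by rewrite /l -divrNN divr_gt0 // oppr_gt0 ?subr_lt0.
have dj : d j 0 < 0.
  rewrite ltNge; apply/negP => dj; move: hj; have := Vz.1.2 j.
  move: bad dj; move: (z j 0) (d j 0) => u w bad dj u0.
  have eu : u = 0 by nra.
  have ew : w = 0 by subst u; nra.
  by rewrite eu ew eqxx.
have [t [t0 feas Vz']] := edge_step Vz Md d0 he (ex_intro _ j dj).
have tl : t <= l by have := feas j; nra.
have fz' : dotp f (z + t *: d) = dotp f z + t * dotp f d by rewrite dotpD dotpZ.
have lt : dotp f (z + t *: d) < dotp f z by rewrite fz'; nra.
have [heq | ne] := eqVneq (dotp f (z + t *: d)) (dotp f x).
  by exists (z + t *: d); split=> //; [exact: ltW | left].
have [|q [Vq fq H]] := IH _ Vz' lt.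
  by rewrite lt_neqAle eq_sym ne fz' /=; nra.
by exists q; split=> //; apply: le_trans fq (ltW lt).
Qed.

Lemma walk_refl n (P : 'cV[R]_n -> Prop) k v : walk_le P k v v.
Proof. by case: k => [|k] //=; left. Qed.

Lemma walk_mono n (P : 'cV[R]_n -> Prop) k k' v w :
  (k <= k')%N -> walk_le P k v w -> walk_le P k' v w.
Proof.
elim: k k' v => [|k IH] [|k'] v //= hk; first by move=> ->; left.
case=> [-> | [u [adj wk]]]; first by left.
by right; exists u; split=> //; apply: IH.
Qed.

Lemma walk_trans n (P : 'cV[R]_n -> Prop) k1 k2 u v w :
  walk_le P k1 u v -> walk_le P k2 v w -> walk_le P (k1 + k2) u w.
Proof.
elim: k1 u => [|k1 IH] u /=; first by move=> ->.
case=> [-> | [u' [adj wk]]] h2; last by right; exists u'; split=> //; exact: IH.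
exact: walk_mono (leqW (leq_addl k1 k2)) h2.
Qed.

Lemma supp_within_col n1 n2 (gx x x' : 'cV[R]_n1) (gy y y' : 'cV[R]_n2) :
  supp_within (col_mx gx gy) (col_mx x y) (col_mx x' y') <->
  supp_within gx x x' /\ supp_within gy y y'.
Proof.
split=> [h | [hx hy] j]; first split=> j.
- by have := h (lshift n2 j); rewrite !col_mxEu.
- by have := h (rshift n1 j); rewrite !col_mxEd.
rewrite -(splitK j); case: (split j) => k /=; rewrite ?col_mxEu ?col_mxEd.
  exact: hx.
exact: hy.
Qed.

Lemma col_mx_nonneg n1 n2 (x : 'cV[R]_n1) (y : 'cV[R]_n2) :
  (forall i, 0 <= col_mx x y i 0) <-> (forall i, 0 <= x i 0) /\ (forall i, 0 <= y i 0).
Proof.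
split=> [h | [hx hy] j]; first split=> j.
- by have := h (lshift n2 j); rewrite col_mxEu.
- by have := h (rshift n1 j); rewrite col_mxEd.
by rewrite -(splitK j); case: (split j) => k /=; rewrite ?col_mxEu ?col_mxEd.
Qed.

End StandardForm.

Section TwoBlocks.
Variables (R : realType) (m1 n1 m2 n2 : nat) (A : 'M[R]_(m1, n1)) (a : 'rV[R]_n1)
  (b : 'rV[R]_n2) (B : 'M[R]_(m2, n2)) (cA : 'cV[R]_m1) (cB : 'cV[R]_m2) (ca cb : R).

Local Notation RM := (Rmat A a b B).
Local Notation RP := (std_poly (Rmat A a b B) (Rrhs cA ca cb cB)).
Local Notation PA := (std_poly A cA).
Local Notation QB := (std_poly B cB).

Definition is_xvertex (z : 'cV[R]_(n1 + n2)) := is_vertex RP z /\ is_vertex PA (usubmx z).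

Definition Rker (gx : 'cV[R]_n1) (gy : 'cV[R]_n2) :=
  [/\ A *m gx = 0, B *m gy = 0 & dotp a gx + dotp b gy = 0].

Lemma Rmat_mul (x : 'cV[R]_n1) (y : 'cV[R]_n2) :
  RM *m col_mx x y = col_mx (A *m x) (col_mx (a *m x + b *m y) (B *m y)).
Proof. by rewrite /Rmat !mul_col_mx !mul_row_col !mul0mx addr0 add0r. Qed.

Lemma Rpoly_colP (x : 'cV[R]_n1) (y : 'cV[R]_n2) :
  RP (col_mx x y) <-> [/\ PA x, QB y & dotp a x + dotp b y = ca + cb].
Proof.
rewrite /std_poly Rmat_mul /Rrhs col_mx_nonneg; split.
  move=> [/eq_col_mx[hA /eq_col_mx[hab hB]] [x0 y0]]; split=> //.
  by move/mx11P: hab; rewrite !dotp_mx11 !mxE /= mulr1n.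
move=> [[hA x0] [hB y0] hab]; split=> //; rewrite hA hB; do 2!congr col_mx.
by apply/mx11P; rewrite !dotp_mx11 !mxE /= mulr1n.
Qed.

Lemma Rmat_kerP (gx : 'cV[R]_n1) (gy : 'cV[R]_n2) :
  RM *m col_mx gx gy = 0 <-> Rker gx gy.
Proof.
rewrite Rmat_mul -(col_mx0 _ m1 (1 + m2)) -(col_mx0 _ 1 m2); split.
  move=> /eq_col_mx[hA /eq_col_mx[hab hB]]; split=> //.
  by move/mx11P: hab; rewrite !dotp_mx11 !mxE /= mulr1n.
move=> [hA hB hab]; rewrite hA hB; do 2!congr col_mx.
by apply/mx11P; rewrite !dotp_mx11 !mxE /= mulr1n hab.
Qed.

Lemma Rvertex_col (x : 'cV[R]_n1) (y : 'cV[R]_n2) : RP (col_mx x y) ->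
  (forall gx gy, Rker gx gy -> supp_within gx x x -> supp_within gy y y ->
     gx = 0 /\ gy = 0) ->
  is_vertex RP (col_mx x y).
Proof.
move=> HP hk; apply: basic_vertex => // g.
rewrite -(vsubmxK g) Rmat_kerP supp_within_col => hker [s1 s2].
by have [-> ->] := hk _ _ hker s1 s2; rewrite col_mx0.
Qed.

Lemma Rvertex_col_basic (x : 'cV[R]_n1) (y : 'cV[R]_n2) gx gy :
  is_vertex RP (col_mx x y) -> Rker gx gy -> supp_within gx x x -> supp_within gy y y ->
  gx = 0 /\ gy = 0.
Proof.
move=> /vertex_basic hb hk s1 s2.
have : col_mx gx gy = 0 by apply: hb; [apply/Rmat_kerP | apply/supp_within_col].
by rewrite -(col_mx0 _ n1 n2) => /eq_col_mx.
Qed.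

Lemma Radjacent_col (x x' : 'cV[R]_n1) (y y' : 'cV[R]_n2) :
  is_vertex RP (col_mx x y) -> is_vertex RP (col_mx x' y') -> col_mx x y <> col_mx x' y' ->
  (forall gx gy, Rker gx gy -> supp_within gx x (x' - x) -> supp_within gy y (y' - y) ->
     exists mu, gx = mu *: (x' - x) /\ gy = mu *: (y' - y)) ->
  adjacent RP (col_mx x y) (col_mx x' y').
Proof.
move=> V1 V2 ne hk; apply/adjacentP; split=> // g.
rewrite opp_col_mx add_col_mx -(vsubmxK g) Rmat_kerP supp_within_col => hker [s1 s2].
have [mu [-> ->]] := hk _ _ hker s1 s2.
by exists mu; rewrite scale_col_mx.
Qed.

Section Edge.
Variables (q d : 'cV[R]_n1).
Hypotheses (Vq : is_vertex PA q) (Ad : A *m d = 0) (hed : edge_dir A q d)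
  (ad0 : dotp a d != 0) (dq : forall j, q j 0 = 0 -> 0 <= d j 0).

Definition line_state l y :=
  [/\ edge_interior q d l, is_vertex QB y & dotp a (q + l *: d) + dotp b y = ca + cb].

Lemma line_std_poly l : (forall j, 0 <= q j 0 + l * d j 0) -> PA (q + l *: d).
Proof. exact: std_poly_line Vq.1 Ad. Qed.

Lemma supp_within_line (g : 'cV[R]_n1) l s : supp_within g (q + l *: d) (s *: d) ->
  supp_within g q d.
Proof. by move=> h j qj dj; apply: h; rewrite !mxE ?qj dj mulr0 ?addr0. Qed.

Lemma edge_dir_leaves : exists j, d j 0 != 0 /\ q j 0 = 0.
Proof.
apply: contrapT => hn; move/eqP: ad0; apply; rewrite [d](vertex_basic Vq) ?dotp0 //.
by move=> j qj _; apply/eqP; apply: contrapT => /negP dj; apply: hn; exists j.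
Qed.

Lemma edge_interior_gt0 l : edge_interior q d l -> 0 < l.
Proof.
move=> hI; have [j [dj qj]] := edge_dir_leaves.
have := hI j; rewrite dj orbT qj add0r => /(_ isT).
by rewrite pmulr_lgt0 // lt_def dj dq.
Qed.

Lemma Rvertex_line l y : line_state l y -> is_vertex RP (col_mx (q + l *: d) y).
Proof.
move=> [hI Vy hr]; apply: Rvertex_col.
  by apply/Rpoly_colP; split=> //; [apply/line_std_poly/edge_interior_nonneg | case: Vy].
move=> gx gy [hA hB hab] s1 s2.
have gy0 : gy = 0 by apply: (vertex_basic Vy).
have [nu enu] := hed hA (supp_within_line (s := 0) (fun j h _ => s1 j h h)).
move: hab; rewrite gy0 dotp0 addr0 enu dotpZ => /eqP; rewrite mulf_eq0 (negbTE ad0) orbF.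
by move/eqP => nu0; rewrite nu0 scale0r.
Qed.

(* The last hypothesis says that the move keeps [a x + b y] constant. *)
Lemma Radjacent_line l l' y e t :
  is_vertex RP (col_mx (q + l *: d) y) -> is_vertex RP (col_mx (q + l' *: d) (y + t *: e)) ->
  B *m e = 0 -> edge_dir B y e -> 0 < t -> e != 0 ->
  (l - l') * dotp a d = t * dotp b e ->
  adjacent RP (col_mx (q + l *: d) y) (col_mx (q + l' *: d) (y + t *: e)).
Proof.
move=> V1 V2 Be hee t0 e0 hrel; apply: Radjacent_col => //.
  move=> /eq_col_mx[_ /eqP]; rewrite addrC -subr_eq subrr eq_sym scaler_eq0.
  by rewrite gt_eqF //= (negbTE e0).
have ex : q + l' *: d - (q + l *: d) = (l' - l) *: d.
  by rewrite scalerBl opprD addrACA subrr add0r.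
have ey : y + t *: e - y = t *: e by rewrite addrC addKr.
rewrite ex ey => gx gy [hA hB hab] s1 s2.
have [nu enu] := hed hA (supp_within_line s1).
have [mu emu] : exists mu, gy = mu *: e.
  by apply: hee => // j yj ej; apply: s2; rewrite // mxE ej mulr0.
have tn : t != 0 by rewrite gt_eqF.
exists (mu / t); split; last by rewrite emu scalerA divfK.
rewrite enu scalerA; congr (_ *: _); apply: (mulIf ad0).
move: hab; rewrite enu emu !dotpZ => /eqP; rewrite addr_eq0 => /eqP ->.
have -> : dotp b e = (l - l') * dotp a d / t by rewrite hrel mulrC mulKf.
by field.
Qed.

Lemma edge_exit l l'' : edge_interior q d l -> ~ edge_interior q d l'' ->
  exists th, [/\ 0 < th, th <= 1,
    forall j, 0 <= q j 0 + (l + th * (l'' - l)) * d j 0 &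
    exists j, d j 0 != 0 /\ q j 0 + (l + th * (l'' - l)) * d j 0 = 0].
Proof.
move=> hI /existsPNP[j1 Pj1 /negP]; rewrite -leNgt => bad.
pose P j := (q j 0 != 0) || (d j 0 != 0).
have z0 j : P j -> 0 <= q j 0 + l * d j 0 by move/hI/ltW.
have [|t [t0 feas [j0 [Pj0 dj0 ej0]]]] :=
    ratio_test (d := fun j => (l'' - l) * d j 0) z0.
  by exists j1; split=> //; have := hI _ Pj1; lra.
have tp : 0 < t.
  rewrite lt_def t0 andbT; apply: contraTneq (hI _ Pj0) => t0'.
  by rewrite -ej0 t0' mul0r addr0 ltxx.
exists t; split=> //.
- have := feas _ Pj1; have := hI _ Pj1.
  move: bad; move: (q j1 0) (d j1 0) => u w bad h1 h2.
  have h3 : (l'' - l) * w < 0 by lra.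
  nra.
- move=> j; have [Pj | ] := boolP (P j).
    by have := feas _ Pj; congr (0 <= _); ring.
  rewrite negb_or !negbK => /andP[/eqP -> /eqP ->].
  by rewrite mulr0 addr0.
exists j0; split; first by apply: contraTneq dj0 => ->; rewrite mulr0 ltxx.
by rewrite -ej0; ring.
Qed.

Lemma Rstep_to_xvertex l y e t l' : line_state l y ->
  B *m e = 0 -> edge_dir B y e -> 0 < t -> QB (y + t *: e) -> dotp b e != 0 ->
  (l - l') * dotp a d = t * dotp b e ->
  (forall j, 0 <= q j 0 + l' * d j 0) -> (exists j, d j 0 != 0 /\ q j 0 + l' * d j 0 = 0) ->
  exists2 z', is_xvertex z' & adjacent RP (col_mx (q + l *: d) y) z'.
Proof.
move=> st Be hee t0 Py' be0 hrel feas [j0 [dj0 hj0]]; have [hI Vy hr] := st.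
have VAx' : is_vertex PA (q + l' *: d).
  apply: (edge_dir_vertex hed (line_std_poly feas)); last by exists j0; rewrite !mxE.
  by move=> j qj dj; rewrite !mxE qj dj mulr0 addr0.
have rel' : dotp a (q + l' *: d) + dotp b (y + t *: e) = ca + cb.
  by rewrite -hr !dotpD !dotpZ -hrel; ring.
have V2 : is_vertex RP (col_mx (q + l' *: d) (y + t *: e)).
  apply: Rvertex_col; first by apply/Rpoly_colP; split=> //; exact: VAx'.1.
  move=> gx gy [hA hB hab] s1 s2.
  have gx0 : gx = 0 by apply: (vertex_basic VAx').
  have [mu emu] : exists mu, gy = mu *: e.
    by apply: hee => // j yj ej; apply: s2; rewrite !mxE yj ej mulr0 addr0.
  split=> //; move: hab; rewrite gx0 dotp0 add0r emu dotpZ => /eqP.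
  by rewrite mulf_eq0 (negbTE be0) orbF => /eqP ->; rewrite scale0r.
exists (col_mx (q + l' *: d) (y + t *: e)); first by split; rewrite ?col_mxKu.
apply: Radjacent_line hrel => //; first exact: Rvertex_line.
by apply: contraNneq be0 => ->; rewrite dotp0.
Qed.

Lemma Rlift_edge l y u : line_state l y -> adjacent QB y u ->
  (exists l', line_state l' u /\ adjacent RP (col_mx (q + l *: d) y) (col_mx (q + l' *: d) u))
  \/ exists2 z', is_xvertex z' & adjacent RP (col_mx (q + l *: d) y) z'.
Proof.
move=> st /adjacentP[_ Vu nyu hee]; have [hI Vy hr] := st.
have Be : B *m (u - y) = 0 by rewrite mulmxBr Vu.1.1 Vy.1.1 subrr.
have eu : u = y + 1 *: (u - y) by rewrite scale1r addrC subrK.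
pose kap := - dotp b (u - y) / dotp a d.
have hrel : (l - (l + kap)) * dotp a d = 1 * dotp b (u - y) by rewrite /kap; field.
have [hI' | hI'] := pselect (edge_interior q d (l + kap)).
  have st' : line_state (l + kap) u.
    have hbu : dotp b u = dotp b y + (l - (l + kap)) * dotp a d.
      by rewrite hrel mul1r dotpB; ring.
    by split=> //; rewrite -hr !dotpD !dotpZ hbu; ring.
  left; exists (l + kap); split=> //; rewrite [in X in adjacent _ _ X]eu.
  apply: Radjacent_line hrel => //; [exact: Rvertex_line | rewrite -eu; exact: Rvertex_line |].
  by rewrite subr_eq0; apply/eqP/nesym.
right; have [th [th0 th1 feas hit]] := edge_exit hI hI'.
have be0 : dotp b (u - y) != 0.
  apply: contra_notN hI' => /eqP be0.
  by rewrite /kap be0 oppr0 mul0r addr0.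
have Py' : QB (y + th *: (u - y)).
  have -> : y + th *: (u - y) = th *: u + (1 - th) *: y.
    by apply/matrixP => i j; rewrite !mxE; ring.
  by apply: std_poly_conv Vu.1 Vy.1 _; rewrite th1 ltW.
apply: (Rstep_to_xvertex st Be hee th0 Py' be0 _ feas hit).
by move: hrel; rewrite mul1r => <-; ring.
Qed.

Lemma Rlift_walk k l y y' : walk_le QB k y y' -> line_state l y ->
  (exists2 z', is_xvertex z' & walk_le RP k (col_mx (q + l *: d) y) z') \/
  exists l', line_state l' y' /\
             walk_le RP k (col_mx (q + l *: d) y) (col_mx (q + l' *: d) y').
Proof.
elim: k l y => [|k IH] l y /=; first by move=> -> st; right; exists l.
case=> [-> st | [u [hadj wk]] st]; first by right; exists l; split=> //; left.
have [[l' [st' adj]] | [z' Xz' adj]] := Rlift_edge st hadj; last first.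
  by left; exists z' => //; right; exists z'; split=> //; apply: walk_refl.
have [[z' Xz' wz] | [l'' [st'' wz]]] := IH l' u wk st'.
  by left; exists z' => //; right; exists (col_mx (q + l' *: d) u).
by right; exists l''; split=> //; right; exists (col_mx (q + l' *: d) u).
Qed.

Lemma Rray_to_xvertex l y r : line_state l y ->
  B *m r = 0 -> (forall j, 0 <= r j 0) -> edge_dir B y r -> 0 < dotp a d * dotp b r ->
  exists2 z', is_xvertex z' & walk_le RP 1 (col_mx (q + l *: d) y) z'.
Proof.
move=> st Br r0 her pos; have [hI Vy _] := st.
have [j [dj qj]] := edge_dir_leaves.
have lp := edge_interior_gt0 hI.
have br0 : dotp b r != 0 by apply: contraTneq pos => ->; rewrite mulr0 ltxx.
pose t := l * dotp a d / dotp b r.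
have t0 : 0 < t.
  have bb : 0 < dotp b r * dotp b r by rewrite lt_def mulf_neq0 //= -expr2 sqr_ge0.
  have -> : t = l * (dotp a d * dotp b r / (dotp b r * dotp b r)) by rewrite /t; field.
  by rewrite mulr_gt0 // divr_gt0.
have Py' : QB (y + t *: r).
  by apply: std_poly_line Vy.1 Br _ => i; rewrite addr_ge0 ?Vy.1.2 // mulr_ge0 // ltW.
have hrel : (l - 0) * dotp a d = t * dotp b r by rewrite subr0 /t divfK.
have feas i : 0 <= q i 0 + 0 * d i 0 by rewrite mul0r addr0 Vq.1.2.
have hit : exists j, d j 0 != 0 /\ q j 0 + 0 * d j 0 = 0.
  by exists j; rewrite mul0r addr0.
have [z' Xz' adj] := Rstep_to_xvertex st Br her t0 Py' br0 hrel feas hit.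
by exists z' => //; right; exists z'.
Qed.

(* [ys] rules out that the walk towards the minimum of [eps * b y] on Q_B ends there. *)
Lemma Rline_to_xvertex kB eps l y ys :
  diam_le QB kB -> eps * dotp a d < 0 -> QB ys ->
  eps * dotp b ys <= eps * (ca + cb - dotp a q) -> line_state l y ->
  exists2 z', is_xvertex z' & walk_le RP (kB + 1) (col_mx (q + l *: d) y) z'.
Proof.
move=> hkB ead PBys hys st; have [_ Vy _] := st.
have [yo Vyo Hyo] := simplex_descent (eps *: b) Vy.
have [[z' Xz' wz] | [l' [st' wz]]] := Rlift_walk (hkB _ _ Vy Vyo) st.
  by exists z' => //; apply: walk_mono wz; rewrite addn1.
have [hmin | [r [Br r0 br her]]] := Hyo; last first.
  have [|z' Xz' wz'] := Rray_to_xvertex st' Br r0 her.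
    by move: br; rewrite dotpZl => br; nra.
  by exists z' => //; exact: walk_trans wz wz'.
exfalso; have [hI' _ hr'] := st'; have lp := edge_interior_gt0 hI'.
have e1 : eps * dotp b yo = eps * (ca + cb - dotp a q) - l' * (eps * dotp a d).
  by rewrite -hr' dotpD dotpZ; ring.
have := hmin ys PBys; rewrite !dotpZl => h.
have : 0 < l' * - (eps * dotp a d) by rewrite mulr_gt0 // oppr_gt0.
lra.
Qed.

End Edge.

Section Level.
Variables (x1 : 'cV[R]_n1) (y1 : 'cV[R]_n2).
Hypotheses (Vy1 : is_vertex QB y1) (PA1 : PA x1) (rel1 : dotp a x1 + dotp b y1 = ca + cb).

Local Notation level := (std_poly (col_mx A a) (col_mx A a *m x1)).

Lemma level_polyP x : level x <-> PA x /\ dotp a x = dotp a x1.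
Proof.
rewrite /std_poly !mul_col_mx; split.
  move=> [/eq_col_mx[hA ha] x0]; split; first by split; rewrite ?hA ?PA1.1.
  by move/mx11P: ha; rewrite !dotp_mx11 !mxE.
by move=> [[hA x0] ha]; split=> //; rewrite hA PA1.1 !dotp_mx11 ha.
Qed.

Lemma level_kerP g : col_mx A a *m g = 0 <-> A *m g = 0 /\ dotp a g = 0.
Proof.
rewrite mul_col_mx -(col_mx0 _ m1 1); split.
  by move=> /eq_col_mx[-> h]; split=> //; move/mx11P: h; rewrite dotp_mx11 !mxE.
by move=> [-> h]; rewrite dotp_mx11 h; congr col_mx; apply/mx11P; rewrite !mxE mul0rn.
Qed.

Lemma level_vertex x : PA x -> dotp a x = dotp a x1 ->
  (forall g, A *m g = 0 -> dotp a g = 0 -> supp_within g x x -> g = 0) ->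
  is_vertex level x.
Proof.
move=> Px ax hb; apply: basic_vertex; first exact/level_polyP.
by move=> g /level_kerP[]; apply: hb.
Qed.

Lemma level_vertex_of_Rvertex : is_vertex RP (col_mx x1 y1) -> is_vertex level x1.
Proof.
move=> Vz1; apply: level_vertex => // g hA ag sg.
have s0 : supp_within (0 : 'cV[R]_n2) y1 y1 by move=> j _ _; rewrite mxE.
have hk : Rker g 0 by split; rewrite ?mulmx0 // dotp0 addr0.
by have [] := Rvertex_col_basic Vz1 hk sg s0.
Qed.

Lemma Rvertex_level x : is_vertex level x -> is_vertex RP (col_mx x y1).
Proof.
move=> Vx; have [Px ax] := (level_polyP x).1 Vx.1.
apply: Rvertex_col; first by apply/Rpoly_colP; split=> //; [case: Vy1 | rewrite ax].
move=> gx gy [hA hB hab] s1 s2.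
have gy0 : gy = 0 by apply: (vertex_basic Vy1).
split=> //; apply: (vertex_basic Vx) => //; apply/level_kerP; split=> //.
by move: hab; rewrite gy0 dotp0 addr0.
Qed.

Lemma Rwalk_level k x x' : walk_le level k x x' -> walk_le RP k (col_mx x y1) (col_mx x' y1).
Proof.
elim: k x => [|k IH] x /=; first by move=> ->.
case=> [-> | [u [/adjacentP[Vx Vu nxu hk] wk]]]; first by left.
right; exists (col_mx u y1); split; last exact: IH.
apply: Radjacent_col; [exact: Rvertex_level | exact: Rvertex_level | |].
  by move=> /eq_col_mx[/nxu].
move=> gx gy [hA hB hab] s1 s2.
have gy0 : gy = 0 by apply: (vertex_basic Vy1) => // j yj _; apply: s2; rewrite // subrr mxE.
have [|mu ->] := hk gx _ s1; last by exists mu; rewrite gy0 subrr scaler0.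
by apply/level_kerP; split=> //; move: hab; rewrite gy0 dotp0 addr0.
Qed.

Section Reach.
Variables kA kB : nat.
Hypotheses (hkA : mx_diam_le (col_mx A a) kA) (hkB : diam_le QB kB)
  (Vx1 : is_vertex level x1).

Lemma reach_xvertex_on_level w : is_vertex PA w -> dotp a w = dotp a x1 ->
  exists2 z', is_xvertex z' & walk_le RP kA (col_mx x1 y1) z'.
Proof.
move=> Vw aw.
have Vw' : is_vertex level w.
  by apply: level_vertex Vw.1 aw _ => g hA _; apply: vertex_basic Vw g hA.
exists (col_mx w y1); first by split; [exact: Rvertex_level | rewrite col_mxKu].
exact: Rwalk_level (hkA Vx1 Vw').
Qed.

Lemma reach_xvertex_off_level eps v ys :
  is_vertex PA v -> QB ys -> dotp a v + dotp b ys = ca + cb ->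
  eps != 0 -> eps * dotp a x1 < eps * dotp a v ->
  exists2 z', is_xvertex z' & walk_le RP (kA + kB + 1) (col_mx x1 y1) z'.
Proof.
move=> Vv PBys relv e0 lt; have fE x : dotp (eps *: a) x = eps * dotp a x by rewrite dotpZl.
have [|q [Vq fq [hq | [d [Ad dq fd hed [l [hI hl]]]]]]] :=
  simplex_to_level (f := eps *: a) Vv PA1; first by rewrite !fE.
  have [|z' Xz' wz] := reach_xvertex_on_level Vq; first by apply: (mulfI e0); rewrite -!fE.
  by exists z' => //; apply: walk_mono wz; rewrite -addnA leq_addr.
rewrite !fE in fq fd hl; have hx2 := mulfI e0 hl.
have ad0 : dotp a d != 0 by apply: contraTneq fd => ->; rewrite mulr0 ltxx.
have Vx2 : is_vertex level (q + l *: d).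
  apply: level_vertex hx2 _; first exact/(line_std_poly Vq Ad)/edge_interior_nonneg.
  move=> g hA ag sg.
  have [nu enu] := hed g hA (supp_within_line (s := 0) (fun j h _ => sg j h h)).
  move: ag; rewrite enu dotpZ => /eqP; rewrite mulf_eq0 (negbTE ad0) orbF.
  by move/eqP ->; rewrite scale0r.
have st : line_state q d l y1 by split; rewrite // hx2.
have [|z' Xz' wB] := Rline_to_xvertex Vq Ad hed ad0 dq hkB fd PBys _ st.
  by rewrite -relv; move: fq; rewrite mulrBr mulrDr; lra.
exists z' => //; rewrite -addnA.
exact: walk_trans (Rwalk_level (hkA Vx1 Vx2)) wB.
Qed.

End Reach.
End Level.

End TwoBlocks.

Theorem lemma4 (R : realType) (m1 n1 m2 n2 : nat)
  (A : 'M[R]_(m1, n1)) (a : 'rV[R]_n1) (b : 'rV[R]_n2) (B : 'M[R]_(m2, n2))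
  (cA : 'cV[R]_m1) (cB : 'cV[R]_m2) (ca cb : R)
  (ha : a != 0) (hb : b != 0)
  (hsimple : std_nondegenerate (Rmat A a b B) (Rrhs cA ca cb cB))
  (hx : exists z, is_vertex (std_poly (Rmat A a b B) (Rrhs cA ca cb cB)) z /\
                  is_vertex (std_poly A cA) (usubmx z))
  (hy : exists z, is_vertex (std_poly (Rmat A a b B) (Rrhs cA ca cb cB)) z /\
                  is_vertex (std_poly B cB) (dsubmx z))
  (kA kB : nat)
  (hkA : mx_diam_le (col_mx A a) kA)
  (hkB : diam_le (std_poly B cB) kB)
  (z1 : 'cV[R]_(n1 + n2))
  (hz1 : is_vertex (std_poly (Rmat A a b B) (Rrhs cA ca cb cB)) z1 /\
         is_vertex (std_poly B cB) (dsubmx z1)) :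
  exists z', (is_vertex (std_poly (Rmat A a b B) (Rrhs cA ca cb cB)) z' /\
              is_vertex (std_poly A cA) (usubmx z')) /\
             walk_le (std_poly (Rmat A a b B) (Rrhs cA ca cb cB)) (kA + kB + 1) z1 z'.
Proof.
case: hz1; rewrite -[z1]vsubmxK col_mxKd; move: (usubmx z1) (dsubmx z1) => x1 y1 Vz1 Vy1.
have /Rpoly_colP[PA1 _ rel1] := Vz1.1.
have Vx1 := level_vertex_of_Rvertex PA1 Vz1.
have [zs [Vzs Vv]] := hx.
have /Rpoly_colP[_ PBys relv] : std_poly (Rmat A a b B) (Rrhs cA ca cb cB)
    (col_mx (usubmx zs) (dsubmx zs)) by rewrite vsubmxK; exact: Vzs.1.
suff : exists2 z', is_xvertex A a b B cA cB ca cb z' &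
    walk_le (std_poly (Rmat A a b B) (Rrhs cA ca cb cB)) (kA + kB + 1) (col_mx x1 y1) z'.
  by case=> z' Xz' wz; exists z'.
have [hv | hv | hv] := ltgtP (dotp a (usubmx zs)) (dotp a x1).
- apply: (reach_xvertex_off_level (eps := -1) Vy1 PA1 rel1 hkA hkB Vx1 Vv PBys relv).
    by rewrite oppr_eq0 oner_eq0.
  by rewrite !mulN1r ltrN2.
- apply: (reach_xvertex_off_level (eps := 1) Vy1 PA1 rel1 hkA hkB Vx1 Vv PBys relv).
    by rewrite oner_eq0.
  by rewrite !mul1r.
have [z' Xz' wz] := reach_xvertex_on_level Vy1 PA1 rel1 hkA Vx1 Vv hv.
by exists z' => //; apply: walk_mono wz; rewrite -addnA leq_addr.
Qed.
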